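(* Let $\mathcal G$ be a doubly connected molecular graph in which there is at least one edge joining an internal molecule to an external molecule. Then for any two isolated subsets of molecules $\mathbf M_1$ and $\mathbf M_2$ of $\mathcal G$, either $\mathbf M_1\subseteq \mathbf M_2$, or $\mathbf M_2\subseteq \mathbf M_1$, or $\mathbf M_1\cap \mathbf M_2=\emptyset$.
   Context: A molecular graph here is a finite multigraph whose vertices are called molecules; the molecules are partitioned into internal molecules and external molecules. Each edge joins two distinct molecules and has a type: it is a diffusive edge, a blue solid edge, or an edge of some other type (e.g. a dotted edge); parallel edges are allowed. The subgraph consisting of the internal molecules and the edges between them is doubly connected if there exist two disjoint sets of edges, $\mathcal B_{black}$ consisting only of diffusive edges between internal molecules and $\mathcal B_{blue}$ consisting only of blue solid or diffusive edges between internal molecules, such that each of $\mathcal B_{black}$ and $\mathcal B_{blue}$ contains a spanning tree of the set of all internal molecules. The molecular graph $\mathcal G$ is called doubly connected if this internal subgraph is doubly connected (the spanning trees need not contain the external molecules). A (nonempty) subset $\mathbf M$ of internal molecules is called isolated if the total number of edges of $\mathcal G$ (of any type) joining a molecule of $\mathbf M$ to a molecule of $\mathbf M^c$ is exactly two, where $\mathbf M^c$ consists of all internal molecules not in $\mathbf M$ together with all external molecules. *)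

From mathcomp Require Import all_boot.
Set Implicit Arguments. Unset Strict Implicit. Unset Printing Implicit Defensive.

(* Molecular graph: molecules are a finite type V, internal molecules form the
   set [internal] (all other molecules are external); edges form a finite type E
   (so parallel edges are allowed), each edge e has endpoints [ends e]
   (required distinct) and a type [ety e]. *)
Inductive edge_type := Diffusive | BlueSolid | OtherEdge.
Section MolGraph.
Variables (V E : finType) (internal : {set V}) (ends : E -> V * V)
          (ety : E -> edge_type).

Definition between_internal (e : E) : bool :=
  ((ends e).1 \in internal) && ((ends e).2 \in internal).

Definition adj_by (T : {set E}) : rel V :=
  fun x y => [exists e in T, (ends e == (x, y)) || (ends e == (y, x))].

(* T is a spanning tree of the set of internal molecules: T consists of edges
   between internal molecules, connects all internal molecules, and has
   #|internal| - 1 edges (connected graph with n vertices and n-1 edges). *)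
Definition spanning_tree_internal (T : {set E}) : Prop :=
  (forall e, e \in T -> between_internal e) /\
  (forall x y, x \in internal -> y \in internal -> connect (adj_by T) x y) /\
  #|T|.+1 = #|internal|.

Definition contains_spanning_tree (B : {set E}) : Prop :=
  exists T : {set E}, T \subset B /\ spanning_tree_internal T.

Definition doubly_connected : Prop :=
  exists Bblack Bblue : {set E},
    [disjoint Bblack & Bblue] /\
    (forall e, e \in Bblack -> between_internal e /\ ety e = Diffusive) /\
    (forall e, e \in Bblue -> between_internal e /\
                              (ety e = BlueSolid \/ ety e = Diffusive)) /\
    contains_spanning_tree Bblack /\ contains_spanning_tree Bblue.

(* M^c = all molecules not in M (other internal ones and all external ones);
   an edge joins M to M^c iff exactly one endpoint lies in M. *)
Definition crossing_edges (M : {set V}) : {set E} :=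
  [set e | ((ends e).1 \in M) != ((ends e).2 \in M)].

Definition isolated (M : {set V}) : Prop :=
  M != set0 /\ M \subset internal /\ #|crossing_edges M| = 2.

End MolGraph.

(* Colour each molecule by the pair (v \in M1, v \in M2).  An edge joins two
   differently coloured molecules exactly when it crosses M1 or M2, so at most
   2 + 2 = 4 edges are bichromatic.  A set of edges connecting the internal
   molecules must contain at least k - 1 bichromatic edges, where k is the
   number of colours used on internal molecules (merge two colours along a
   bichromatic edge and induct).  If M1 and M2 overlap without being nested,
   three colours occur inside; the two disjoint spanning trees then need
   2 * 3 = 6 bichromatic edges if the fourth colour occurs inside too, and
   otherwise 2 * 2 = 4 internal ones plus the edge to an external molecule,
   which is bichromatic as well: too many in both cases. *)
From mathcomp Require Import all_boot zify.
Set Implicit Arguments. Unset Strict Implicit. Unset Printing Implicit Defensive.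

Section Bichromatic.
Variables (V E : finType) (ends : E -> V * V).

Definition bichromatic (C : eqType) (A : {set E}) (f : V -> C) : {set E} :=
  [set e in A | f (ends e).1 != f (ends e).2].

Lemma bichromatic_sub (C : eqType) (A : {set E}) (f : V -> C) :
  bichromatic A f \subset A.
Proof. by apply/subsetP => e; rewrite inE => /andP []. Qed.

Lemma bichromaticS (C : eqType) (A B : {set E}) (f : V -> C) :
  A \subset B -> bichromatic A f \subset bichromatic B f.
Proof.
by move=> AB; apply/subsetP => e; rewrite !inE => /andP [/(subsetP AB) -> ->].
Qed.

Lemma connect_monochromatic (C : eqType) (A : {set E}) (f : V -> C) x y :
  bichromatic A f = set0 -> connect (adj_by ends A) x y -> f x = f y.
Proof.
move=> mono /connectP [p]; elim: p x => [x _ -> //|z p IH x] /=.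
case/andP=> /existsP [e /andP [eA exz]] zp y_last; rewrite -(IH z zp y_last).
have: e \notin bichromatic A f by rewrite mono inE.
by rewrite inE eA negbK; case/orP: exz => /eqP -> /eqP.
Qed.

Section ConnectingSet.
Variables (internal : {set V}) (T : {set E}).
Hypothesis T_connects :
  forall x y, x \in internal -> y \in internal -> connect (adj_by ends T) x y.

Lemma card_imset_monochromatic (C : finType) (f : V -> C) :
  bichromatic T f = set0 -> #|f @: internal| <= 1.
Proof.
move=> mono; have [->|[x xI]] := set_0Vmem internal; first by rewrite imset0 cards0.
rewrite -(cards1 (f x)); apply: subset_leq_card.
apply/subsetP => _ /imsetP [y yI ->]; rewrite inE.
by rewrite (connect_monochromatic mono (T_connects yI xI)).
Qed.

Lemma card_imset_le_bichromatic (C : finType) (f : V -> C) :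
  #|f @: internal| <= #|bichromatic T f|.+1.
Proof.
have [n] := ubnP #|bichromatic T f|; elim: n f => // n IH f lt_bich_n.
have [mono|[e]] := set_0Vmem (bichromatic T f).
  by rewrite mono cards0 (card_imset_monochromatic mono).
rewrite inE => /andP [eT f_e]; set a := f (ends e).1; set b := f (ends e).2.
pose g v := if f v == b then a else f v.
have g_e : g (ends e).1 = g (ends e).2 by rewrite /g eqxx (negbTE f_e).
have bich_g : bichromatic T g \subset bichromatic T f :\ e.
  apply/subsetP => e'; rewrite !inE => /andP [e'T g_e'].
  rewrite e'T /=; apply/andP; split.
    by apply: contraNneq g_e' => ->; rewrite g_e.
  by apply: contraNneq g_e' => f_e'; rewrite /g f_e'.
have img_f : f @: internal \subset b |: g @: internal.
  apply/subsetP => _ /imsetP [v vI ->]; rewrite !inE.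
  have [//|fvb] := eqVneq (f v) b.
  by rewrite /= (_ : f v = g v) ?imset_f // /g (negbTE fvb).
have card_bich : #|bichromatic T f| = #|bichromatic T f :\ e|.+1.
  by rewrite (cardsD1 e) inE eT f_e.
have le_g := subset_leq_card bich_g; have le_f := subset_leq_card img_f.
have := IH g (leq_ltn_trans le_g _); rewrite cardsU1 in le_f; lia.
Qed.

End ConnectingSet.
End Bichromatic.

Section DoublyConnected.
Variables (V E : finType) (internal : {set V}) (ends : E -> V * V)
          (ety : E -> edge_type).

Definition internal_edges : {set E} := [set e | between_internal internal ends e].

Lemma bichromatic_tree_internal (T : {set E}) (C : eqType) (f : V -> C) :
  spanning_tree_internal internal ends T ->
  bichromatic ends T f \subset bichromatic ends internal_edges f.
Proof.
case=> T_int _; apply: bichromaticS.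
by apply/subsetP => e /T_int; rewrite inE.
Qed.

Lemma doubly_connected_bichromatic (C : finType) (f : V -> C) :
  doubly_connected internal ends ety ->
  2 * (#|f @: internal|).-1 <= #|bichromatic ends internal_edges f|.
Proof.
case=> Bblack [Bblue [disj_B [_ [_ [[Tblack [sub_black st_black]]]]]]].
case=> Tblue [sub_blue st_blue].
have le_black := card_imset_le_bichromatic st_black.2.1 f.
have le_blue := card_imset_le_bichromatic st_blue.2.1 f.
set bich_black := bichromatic ends Tblack f in le_black *.
set bich_blue := bichromatic ends Tblue f in le_blue *.
have disj : [disjoint bich_black & bich_blue].
  apply: disjointWl (subset_trans (bichromatic_sub _ _ _) sub_black) _.
  exact: disjointWr (subset_trans (bichromatic_sub _ _ _) sub_blue) disj_B.
have card_U : #|bich_black :|: bich_blue| = #|bich_black| + #|bich_blue|.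
  by apply/eqP; rewrite (leq_card_setU _ _).2.
have sub_U : bich_black :|: bich_blue \subset bichromatic ends internal_edges f.
  by rewrite subUset !bichromatic_tree_internal.
have := subset_leq_card sub_U; rewrite card_U; lia.
Qed.

End DoublyConnected.

Section Venn.
Variables (V E : finType) (internal : {set V}) (ends : E -> V * V)
          (M1 M2 : {set V}).
Hypotheses (M1_int : M1 \subset internal) (M2_int : M2 \subset internal).

Definition venn (v : V) : bool * bool := (v \in M1, v \in M2).

Lemma crossing_venn e :
  (e \in crossing_edges ends M1 :|: crossing_edges ends M2) =
  (venn (ends e).1 != venn (ends e).2).
Proof. by rewrite !inE xpair_eqE negb_and. Qed.

Lemma card_venn_overlap :
  ~~ (M1 \subset M2) -> ~~ (M2 \subset M1) -> ~~ [disjoint M1 & M2] ->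
  #|venn @: internal| = ((false, false) \in venn @: internal) + 3.
Proof.
move=> /subsetPn [x1 x1M1 x1M2] /subsetPn [x2 x2M2 x2M1].
rewrite -setI_eq0 => /set0Pn [x12]; rewrite inE => /andP [x12M1 x12M2].
have sub : [set~ (false, false)] \subset venn @: internal.
  apply/subsetP => -[[] []]; rewrite in_setC1 //= => _; apply/imsetP.
  - by exists x12; [exact: subsetP M1_int _ x12M1 | rewrite /venn x12M1 x12M2].
  - by exists x1; [exact: subsetP M1_int _ x1M1 | rewrite /venn x1M1 (negbTE x1M2)].
  - by exists x2; [exact: subsetP M2_int _ x2M2 | rewrite /venn x2M2 (negbTE x2M1)].
rewrite (cardsD1 (false, false)); congr (_ + _).
have -> : venn @: internal :\ (false, false) = [set~ (false, false)].
  apply/setP => c; rewrite in_setD1 in_setC1.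
  by case: eqP => //= /eqP c_ff; rewrite (subsetP sub) // in_setC1.
by rewrite cardsC1 card_prod card_bool.
Qed.

Lemma venn_internal_external u w :
  (false, false) \notin venn @: internal ->
  u \in internal -> w \notin internal -> venn u != venn w.
Proof.
move=> ff_out uI wI; have -> : venn w = (false, false).
  by rewrite /venn (contraNF (subsetP M1_int w) wI) (contraNF (subsetP M2_int w) wI).
by apply: contraNneq ff_out => <-; exact: imset_f.
Qed.

End Venn.

Theorem claim5p3 (V E : finType) (internal : {set V}) (ends : E -> V * V)
    (ety : E -> edge_type)
    (Hloop : forall e : E, (ends e).1 != (ends e).2)
    (Hdc : doubly_connected internal ends ety)
    (Hext : exists e : E,
        (((ends e).1 \in internal) && ((ends e).2 \notin internal)) ||
        (((ends e).2 \in internal) && ((ends e).1 \notin internal)))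
    (M1 M2 : {set V})
    (H1 : isolated internal ends M1) (H2 : isolated internal ends M2) :
  M1 \subset M2 \/ M2 \subset M1 \/ [disjoint M1 & M2].
Proof.
case: H1 H2 => _ [M1_int card1] [_ [M2_int card2]].
have [|not12] := boolP (M1 \subset M2); first by left.
have [|not21] := boolP (M2 \subset M1); first by right; left.
have [|overlap] := boolP [disjoint M1 & M2]; first by right; right.
exfalso; set U := crossing_edges ends M1 :|: crossing_edges ends M2.
have card_U : #|U| <= 4 by rewrite cardsU card1 card2 leq_subr.
set Bint := bichromatic ends (internal_edges internal ends) (venn M1 M2).
have sub_U : Bint \subset U.
  by apply/subsetP => e; rewrite /U crossing_venn inE => /andP [].
have := doubly_connected_bichromatic (venn M1 M2) Hdc.
rewrite -/Bint (card_venn_overlap M1_int M2_int not12 not21 overlap).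
have [_|ff_out] := boolP ((false, false) \in venn M1 M2 @: internal) => /= le_Bint.
  by have := leq_trans le_Bint (leq_trans (subset_leq_card sub_U) card_U).
have [e0 ext_e0] := Hext.
have e0_U : e0 \in U.
  rewrite /U crossing_venn; have := venn_internal_external M1_int M2_int ff_out.
  by case/orP: ext_e0 => /andP [eI eO] ext; [|rewrite eq_sym]; exact: ext.
have e0_Bint : e0 \notin Bint.
  rewrite !inE /between_internal.
  by case/orP: ext_e0 => /andP [_ /negbTE ->]; rewrite ?andbF.
have lt_U : #|Bint| < #|U| by apply/proper_card/properP; split=> //; exists e0.
by have := leq_trans (leq_ltn_trans le_Bint lt_U) card_U.
Qed.
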